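(* Let $u, v \in U_n$ be symmetries (unitaries with $\mathrm{spec}(u),\mathrm{spec}(v) \subseteq \{1, -1\}$) such that $d_\infty(u, v) < \pi$. Then the geodesic $\gamma_{u,v}$ consists of symmetries, i.e. $\mathrm{spec}(\gamma_{u,v}(t))\subseteq\{1,-1\}$ for all $t\in[0,1]$.
   Context: $U_n$ is the unitary group, $\mathfrak{u}_n$ the skew-Hermitian matrices, $\|\cdot\|_\infty$ the operator norm. $d_\infty(u,v)$ is the infimum of $\int\|\dot\alpha(t)\|_\infty\,dt$ over piecewise smooth curves $\alpha$ in $U_n$ joining $u$ and $v$. For $d_\infty(u,v)<\pi$, $\gamma_{u,v}(t)=u\exp(t\log(u^{-1}v))$, $t\in[0,1]$, where $\log(w)$ is the unique $y\in\mathfrak{u}_n$ with $\|y\|_\infty<\pi$ and $e^y=w$; it is the unique minimal geodesic joining $u$ and $v$. *)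

From HB Require Import structures.
From mathcomp Require Import all_boot all_order all_algebra.
From mathcomp Require Import all_classical all_reals all_analysis.
From mathcomp Require Import complex.
Set Implicit Arguments. Unset Strict Implicit. Unset Printing Implicit Defensive.
Import Order.TTheory GRing.Theory Num.Theory.
Import numFieldNormedType.Exports.
Local Open Scope classical_set_scope.
Local Open Scope ring_scope.

Section UnitaryDefs.
Variables (R : realType) (n : nat).
Local Notation C := (R[i]).
Local Notation M := ('M[C]_n).

Definition adj (w : M) : M := \matrix_(i, j) complex.conjc (w j i).

Definition unitary (w : M) : Prop := adj w *m w = 1%:M.

Definition skew_hermitian (y : M) : Prop := adj y = - y.

Definition vnorm (x : 'cV[C]_n) : R :=
  Num.sqrt (\sum_i ((complex.Re (x i 0)) ^+ 2 + (complex.Im (x i 0)) ^+ 2)).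

Definition opnorm (A : M) : R :=
  sup [set vnorm (A *m x) | x in [set x : 'cV[C]_n | vnorm x = 1]].

Definition spec_pm1 (w : M) : Prop :=
  forall a : C, eigenvalue w a -> a = 1 \/ a = -1.

Definition symmetry (w : M) : Prop := unitary w /\ spec_pm1 w.

Definition expm_psum (y : M) (N : nat) : M :=
  \sum_(k < N) ((k`!)%:R)^-1 *: y ^+ k.
Definition expm (y : M) : M :=
  \matrix_(i, j) Complex (limn (fun N => complex.Re (expm_psum y N i j)))
                         (limn (fun N => complex.Im (expm_psum y N i j))).

Definition mlog (w : M) : M :=
  xget 0 [set y | skew_hermitian y /\ opnorm y < pi /\ expm y = w].

Definition geodesic (u v : M) (t : R) : M :=
  u *m expm (Complex t 0 *: mlog (invmx u *m v)).

Definition smooth_fun (f : R -> R) : Prop :=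
  forall (k : nat) (t : R), derivable (derive1n k f) t 1.

Definition smooth_curve (b : R -> M) : Prop :=
  forall i j, smooth_fun (fun t => complex.Re (b t i j)) /\
              smooth_fun (fun t => complex.Im (b t i j)).

Definition mderiv (b : R -> M) (t : R) : M :=
  \matrix_(i, j) Complex (derive1 (fun s => complex.Re (b s i j)) t)
                         (derive1 (fun s => complex.Im (b s i j)) t).

(* Piecewise smooth:
   there is a partition 0 = p_0 < ... < p_k = 1 such that on each [p_i, p_{i+1}]
   alpha agrees with a smooth curve b_i. *)
Definition ps_curve_length (u v : M) (L : \bar R) : Prop :=
  exists (alpha : R -> M) (k : nat) (p : nat -> R) (b : nat -> R -> M),
    [/\ alpha 0 = u /\ alpha 1 = v,
        (forall t, 0 <= t <= 1 -> unitary (alpha t)),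
        (0 < k)%N /\ p 0%N = 0 /\ p k = 1 /\
        (forall i, (i < k)%N -> p i < p i.+1),
        (forall i, (i < k)%N -> smooth_curve (b i) /\
            forall t, p i <= t <= p i.+1 -> alpha t = b i t) &
        L = (\sum_(i < k)
              \int[lebesgue_measure]_(t in `[p i, p i.+1])
                 (opnorm (mderiv (b i) t))%:E)%E].

Definition d_inf (u v : M) : \bar R := ereal_inf [set L | ps_curve_length u v L].

End UnitaryDefs.

From HB Require Import structures.
From mathcomp Require Import all_boot all_order all_algebra.
From mathcomp Require Import all_classical all_reals all_analysis.
From mathcomp Require Import complex.
From mathcomp Require Import ring lra.
Import Order.TTheory GRing.Theory Num.Theory.
Import numFieldNormedType.Exports.
Local Open Scope classical_set_scope.
Local Open Scope ring_scope.
Set Implicit Arguments. Unset Strict Implicit. Unset Printing Implicit Defensive.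

(* Symmetries are the unitaries whose square is 1, so u^-1 = u.  Diagonalize
   y = log(u v) as P^-1 diag(i th) P with P unitary; ||y|| < pi gives
   |th_k| < pi.  In this eigenbasis Q := P u P^-1 satisfies Q^2 = 1, and
   u e^y = v gives (Q L)^2 = 1 for L = diag(e^(i th)), i.e. L Q = Q L^-1, i.e.
   e^(i th_j) Q_jk = Q_jk e^(-i th_k).  As t |-> e^(i t) is injective on
   ]-pi, pi[, every nonzero Q_jk forces th_j = - th_k, so the same relation
   holds for t th; hence (u e^(t y))^2 = 1. *)

Section ImaginaryExponential.
Variable R : realType.
Local Notation C := R[i].

Lemma complex_eta (z : C) : z = Complex (complex.Re z) (complex.Im z).
Proof. by case: z. Qed.

Lemma Re_mul (x y : C) :
  complex.Re (x * y) = complex.Re x * complex.Re y - complex.Im x * complex.Im y.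
Proof. by case: x; case: y. Qed.

Lemma Im_mul (x y : C) :
  complex.Im (x * y) = complex.Re x * complex.Im y + complex.Im x * complex.Re y.
Proof. by case: x; case: y. Qed.

Lemma Re_sum I (r : seq I) (P : pred I) (F : I -> C) :
  complex.Re (\sum_(i <- r | P i) F i) = \sum_(i <- r | P i) complex.Re (F i).
Proof. by apply: (big_morph (@complex.Re R)) => // -[a b] [c d]. Qed.

Lemma Im_sum I (r : seq I) (P : pred I) (F : I -> C) :
  complex.Im (\sum_(i <- r | P i) F i) = \sum_(i <- r | P i) complex.Im (F i).
Proof. by apply: (big_morph (@complex.Im R)) => // -[a b] [c d]. Qed.

Lemma expr_imag (t : R) k : (Complex 0 t : C) ^+ k =
  Complex ((~~ odd k)%:R * (-1) ^+ k./2 * t ^+ k)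
          ((odd k)%:R * (-1) ^+ k.-1./2 * t ^+ k).
Proof.
elim: k => [|k IH]; first by rewrite !expr0 /= !mulr1.
rewrite exprSr IH; simpc.
have := odd_double_half k; set m := k./2; clearbody m.
case: (odd k) => <- /=; rewrite ?add1n ?add0n /= ?odd_double /= ?uphalf_double ?doubleK;
  by congr Complex; rewrite !exprS; ring.
Qed.

Definition expc_psum (z : C) (N : nat) : C := \sum_(k < N) (k`!%:R)^-1 * z ^+ k.

Lemma expc_psum_imag t N : expc_psum (Complex 0 t) N =
  Complex (series (cos_coeff t) N) (series (sin_coeff t) N).
Proof.
rewrite [LHS]complex_eta /expc_psum Re_sum Im_sum /series /= !big_mkord.
have invfE k : (k`!%:R : C)^-1 = Complex (k`!%:R^-1) 0.
  by rewrite (complexr0 (k`!%:R^-1)) fmorphV rmorph_nat.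
by congr Complex; apply: eq_bigr => k _; rewrite invfE expr_imag; simpc; rewrite /= mulrC.
Qed.

Lemma cvg_Re_expc_psum_imag t :
  (fun N => complex.Re (expc_psum (Complex 0 t) N)) @ \oo --> cos t.
Proof.
under eq_fun do rewrite expc_psum_imag /=.
by rewrite unlock; exact: is_cvg_series_cos_coeff.
Qed.

Lemma cvg_Im_expc_psum_imag t :
  (fun N => complex.Im (expc_psum (Complex 0 t) N)) @ \oo --> sin t.
Proof.
under eq_fun do rewrite expc_psum_imag /=.
by rewrite unlock; exact: is_cvg_series_sin_coeff.
Qed.

Definition expi (t : R) : C := Complex (cos t) (sin t).

Lemma expi0 : expi 0 = 1.
Proof. by rewrite /expi cos0 sin0. Qed.

Lemma expiNr t : expi t * expi (- t) = 1.
Proof. by rewrite /expi cosN sinN; simpc; rewrite -!expr2 cos2Dsin2 mulrC addNr. Qed.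

Lemma expi_inj : {in `](- pi), pi[ &, injective expi}.
Proof.
have norm_itv x : x \in `](- pi), pi[ -> `|x| \in `[0, pi].
  by rewrite !in_itv /= -ltr_norml normr_ge0 => /ltW.
move=> a b a_pi b_pi [cos_ab sin_ab].
have /eqP : `|a| = `|b| by apply: cos_inj; rewrite ?norm_itv // !cos_norm.
rewrite eqr_norm2 => /orP[/eqP // | /eqP a_Nb].
have sin_a0 : sin a = 0 by move: sin_ab; rewrite a_Nb sinN => ?; lra.
suff a0 : a = 0 by rewrite a0 -[b]opprK -a_Nb a0 oppr0.
have [// | a_neq0] := eqVneq a 0.
have : 0 < sin `|a|.
  by apply: sin_gt0_pi; rewrite normr_gt0 a_neq0 /= ltr_norml; move: a_pi; rewrite in_itv.
by case: (ler0P a) => _; rewrite ?sinN sin_a0 ?oppr0 ltxx.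
Qed.

Lemma expi_intertwine_scale (x y t : R) (q : C) :
  x \in `](- pi), pi[ -> y \in `](- pi), pi[ ->
  expi x * q = q * expi (- y) -> expi (t * x) * q = q * expi (- (t * y)).
Proof.
move=> x_pi y_pi xqy; have [-> | q_neq0] := eqVneq q 0; first by rewrite mulr0 mul0r.
have -> : x = - y.
  apply: expi_inj; rewrite ?oppr_itvoo ?opprK //.
  by apply: (mulIf q_neq0); rewrite xqy mulrC.
by rewrite mulrN mulrC.
Qed.

End ImaginaryExponential.

Section DiagonalizedMatrices.
Variables (R : realType) (n : nat).
Local Notation C := R[i].
Local Notation M := 'M[C]_n.
Local Open Scope sesquilinear_scope.

Definition diag_imag (th : 'I_n -> R) : M := diag_mx (\row_k Complex 0 (th k)).
Definition diag_expi (th : 'I_n -> R) : M := diag_mx (\row_k expi (th k)).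

Lemma adjE (w : M) : adj w = w ^t*.
Proof. by apply/matrixP => i j; rewrite !mxE; case: (w j i). Qed.

Lemma conj_mulmx (P X Y : M) : P \in unitmx ->
  (invmx P *m X *m P) *m (invmx P *m Y *m P) = invmx P *m (X *m Y) *m P.
Proof. by move=> Pu; rewrite !mulmxA mulmxK. Qed.

Lemma conj_sqr_eq1P (P X : M) : P \in unitmx ->
  (invmx P *m X *m P) *m (invmx P *m X *m P) = 1%:M <-> X *m X = 1%:M.
Proof.
move=> Pu; rewrite conj_mulmx //; split => [XX1 | ->]; last by rewrite mulmx1 mulVmx.
have := congr1 (fun Z => P *m Z *m invmx P) XX1.
by rewrite mulmx1 mulmxV // !mulmxA mulmxV // mul1mx mulmxK.
Qed.

Lemma conj_diag_entry (P : M) (d : 'rV[C]_n) i j :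
  (invmx P *m diag_mx d *m P) i j = \sum_a invmx P i a * P a j * d 0 a.
Proof. by rewrite mul_mx_diag !mxE; apply: eq_bigr => a _; rewrite mxE mulrAC. Qed.

Lemma expr_conj_diag (P : M) (d : 'rV[C]_n) k : P \in unitmx ->
  (invmx P *m diag_mx d *m P) ^+ k = invmx P *m diag_mx (\row_a d 0 a ^+ k) *m P.
Proof.
move=> Pu; elim: k => [|k IH].
  rewrite expr0 (_ : \row__ _ = const_mx 1) ?diag_const_mx ?mulmx1 ?mulVmx //.
  by apply/matrixP => i j; rewrite !mxE.
rewrite exprS IH -mulmxE (conj_mulmx _ _ Pu) mulmx_diag.
apply: (congr1 (fun r => invmx P *m diag_mx r *m P)).
by apply/matrixP => i j; rewrite !mxE exprS.
Qed.

Lemma eigenvalue_conj_diag (P : M) (d : 'rV[C]_n) k : P \in unitmx ->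
  eigenvalue (invmx P *m diag_mx d *m P) (d 0 k).
Proof.
move=> Pu; apply/eigenvalueP; exists (delta_mx 0 k *m P).
  rewrite !mulmxA -(mulmxA _ P) mulmxV // mulmx1 scalemxAl; congr (_ *m _).
  apply/matrixP => i j; rewrite mul_mx_diag !mxE.
  by case: (eqVneq j k) => [->|jk]; rewrite ?andbF ?mulr0 ?mul0r // mulrC.
apply/eqP => /(congr1 (mulmx^~ (invmx P))); rewrite mulmxK // mul0mx.
by move/matrixP => /(_ 0 k); rewrite !mxE !eqxx => /eqP; rewrite oner_eq0.
Qed.

Lemma expm_psum_conj_diag (P : M) (d : 'rV[C]_n) N i j : P \in unitmx ->
  expm_psum (invmx P *m diag_mx d *m P) N i j =
  \sum_a invmx P i a * P a j * expc_psum (d 0 a) N.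
Proof.
move=> Pu; rewrite /expm_psum summxE.
under eq_bigr do rewrite mxE expr_conj_diag // conj_diag_entry mulr_sumr.
rewrite exchange_big; apply: eq_bigr => a _; rewrite /expc_psum mulr_sumr.
by apply: eq_bigr => k _; rewrite mxE mulrCA.
Qed.

Lemma expm_conj_diag_imag (P : M) th : P \in unitmx ->
  expm (invmx P *m diag_imag th *m P) = invmx P *m diag_expi th *m P.
Proof.
move=> Pu; apply/matrixP => i j; rewrite mxE conj_diag_entry [RHS]complex_eta.
have cvg_sum (f : 'I_n -> nat -> R) (l : 'I_n -> R) : (forall a, f a @ \oo --> l a) ->
    (fun N => \sum_a f a N) @ \oo --> \sum_a l a.
  by move=> fl; apply: cvg_big => //; exact: add_continuous.
congr Complex.
- under eq_fun do rewrite expm_psum_conj_diag // Re_sum.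
  apply: cvg_lim => //; rewrite Re_sum; apply: cvg_sum => a.
  under eq_fun do rewrite !mxE Re_mul; rewrite !mxE Re_mul.
  by apply: cvgB; apply: cvgM;
    [exact: cvg_cst | exact: cvg_Re_expc_psum_imag | exact: cvg_cst | exact: cvg_Im_expc_psum_imag].
- under eq_fun do rewrite expm_psum_conj_diag // Im_sum.
  apply: cvg_lim => //; rewrite Im_sum; apply: cvg_sum => a.
  under eq_fun do rewrite !mxE Im_mul; rewrite !mxE Im_mul.
  by apply: cvgD; apply: cvgM;
    [exact: cvg_cst | exact: cvg_Im_expc_psum_imag | exact: cvg_cst | exact: cvg_Re_expc_psum_imag].
Qed.

Lemma expm0 : expm (0 : M) = 1%:M.
Proof.
have := @expm_conj_diag_imag 1%:M (fun=> 0) (unitmx1 _ _).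
rewrite invmx1 mul1mx !mulmx1 /diag_imag /diag_expi expi0.
have -> : \row_k Complex 0 0 = 0 :> 'rV[C]_n by apply/matrixP => ? ?; rewrite !mxE.
have -> : \row_k 1 = const_mx 1 :> 'rV[C]_n by apply/matrixP => ? ?; rewrite !mxE.
by rewrite linear0 diag_const_mx mulmx1.
Qed.

Lemma scale_diag_imag (t : R) th :
  Complex t 0 *: diag_imag th = diag_imag (fun k => t * th k).
Proof. by apply/matrixP => i j; rewrite !mxE mulrnAr; simpc. Qed.

Definition vnorm2 (x : 'cV[C]_n) : R :=
  \sum_i (complex.Re (x i 0) ^+ 2 + complex.Im (x i 0) ^+ 2).

Lemma vnormE x : vnorm x = Num.sqrt (vnorm2 x).
Proof. by []. Qed.

Lemma vnorm2_ge0 x : 0 <= vnorm2 x.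
Proof. by apply: sumr_ge0 => i _; rewrite addr_ge0 ?sqr_ge0. Qed.

Lemma adjmx_mulmx_self x : (x ^t* *m x) 0 0 = Complex (vnorm2 x) 0.
Proof.
have conjM (z : C) : Num.conj z * z = Complex (complex.Re z ^+ 2 + complex.Im z ^+ 2) 0.
  by case: z => a b; rewrite [Num.conj _]/=; simpc; congr Complex; rewrite /=; ring.
rewrite !mxE [LHS]complex_eta Re_sum Im_sum; congr Complex.
  by apply: eq_bigr => i _; rewrite !mxE conjM.
by apply: big1 => i _; rewrite !mxE conjM.
Qed.

Lemma vnorm2_unitary (U : M) x : U ^t* *m U = 1%:M -> vnorm2 (U *m x) = vnorm2 x.
Proof.
move=> UU1; have := adjmx_mulmx_self (U *m x).
by rewrite trmx_mul map_mxM mulmxA -(mulmxA _ _ U) UU1 mulmx1 adjmx_mulmx_self => -[].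
Qed.

Lemma vnorm2_diag_imag th x : vnorm2 (diag_imag th *m x) =
  \sum_i th i ^+ 2 * (complex.Re (x i 0) ^+ 2 + complex.Im (x i 0) ^+ 2).
Proof. by apply: eq_bigr => i _; rewrite mul_diag_mx !mxE Re_mul Im_mul /=; ring. Qed.

Lemma sum_weighted_delta (k : 'I_n) (f : 'I_n -> R) :
  \sum_i f i * (complex.Re ((delta_mx k 0 : 'cV[C]_n) i 0) ^+ 2 +
                complex.Im ((delta_mx k 0 : 'cV[C]_n) i 0) ^+ 2) = f k.
Proof.
rewrite (bigD1 k) //= big1 => [|i ik].
  by rewrite !mxE !eqxx /= expr1n expr0n /= !addr0 mulr1.
by rewrite !mxE (negbTE ik) /= expr0n addr0 mulr0.
Qed.

Lemma opnorm_conj_diag_imag_ge (P : M) th k : P \is unitarymx ->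
  `|th k| <= opnorm (invmx P *m diag_imag th *m P).
Proof.
move=> PU; rewrite invmx_unitary //.
have PPt : P *m P ^t* = 1%:M by exact/unitarymxP.
have PtP : P ^t* *m P = 1%:M by rewrite -invmx_unitary // mulVmx ?unitarymx_unit.
have PtPtt : P ^t* ^t* *m P ^t* = 1%:M by rewrite trmxCK.
apply: ub_le_sup.
  exists (Num.sqrt (\sum_i th i ^+ 2)) => _ [x /= x1 <-].
  have {}x1 : vnorm2 x = 1 by rewrite -[LHS]sqr_sqrtr ?vnorm2_ge0 // -vnormE x1 expr1n.
  rewrite vnormE -!mulmxA vnorm2_unitary // ler_sqrt ?sumr_ge0 // => [|i _]; last exact: sqr_ge0.
  rewrite vnorm2_diag_imag -[X in _ <= X]mulr1 -x1 -[vnorm2 x](vnorm2_unitary _ PtP).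
  rewrite /vnorm2 mulr_sumr; apply: ler_sum => i _.
  rewrite ler_wpM2r ?addr_ge0 ?sqr_ge0 // (bigD1 i) //= lerDl.
  by apply: sumr_ge0 => j _; exact: sqr_ge0.
exists (P ^t* *m delta_mx k 0).
  rewrite /= vnormE vnorm2_unitary // -[RHS]sqrtr1 -(sum_weighted_delta k (fun=> 1)).
  by congr Num.sqrt; apply: eq_bigr => i _; rewrite mul1r.
rewrite vnormE -!mulmxA vnorm2_unitary // (mulmxA P) PPt mul1mx.
by rewrite vnorm2_diag_imag sum_weighted_delta sqrtr_sqr.
Qed.

Lemma skew_hermitian_spectral (y : M) : skew_hermitian y ->
  exists P th, P \is unitarymx /\ y = invmx P *m diag_imag th *m P.
Proof.
rewrite /skew_hermitian adjE => ys.
have /orthomx_spectralP yE : y \is normalmx.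
  by apply/normalmxP; rewrite ys mulmxN mulNmx.
move: (spectralmx y) (spectral_diag y) (spectral_unitarymx y) yE => P d PU yE.
have dE : diag_mx d = P *m y *m P ^t*.
  by rewrite yE invmx_unitary // !mulmxA (unitarymxP PU) mul1mx -mulmxA (unitarymxP PU) mulmx1.
have Re_d k : complex.Re (d 0 k) = 0.
  have /matrixP/(_ k k) : (diag_mx d) ^t* = - diag_mx d.
    by rewrite dE !trmx_mul !map_mxM trmxCK ys mulNmx mulmxN mulmxA.
  by rewrite !mxE eqxx !mulr1n; case: (d 0 k) => a b; simpc => -[] /=; lra.
have dE' : d = \row_k Complex 0 (complex.Im (d 0 k)).
  by apply/matrixP => i k; rewrite ord1 mxE [LHS]complex_eta Re_d.
by exists P, (fun k => complex.Im (d 0 k)); split; last rewrite /diag_imag -dE'.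
Qed.

Lemma spec_pm1_sqr_eq1 (w : M) : w *m w = 1%:M -> spec_pm1 w.
Proof.
move=> ww1 a /eigenvalueP [x xw x_neq0].
have : x = a ^+ 2 *: x.
  by rewrite -{1}(mulmx1 x) -ww1 mulmxA xw -scalemxAl xw scalerA expr2.
move/eqP; rewrite -subr_eq0 -{1}(scale1r x) -scalerBl scaler_eq0 (negbTE x_neq0) orbF.
by rewrite subr_eq0 eq_sym sqrf_eq1 => /orP[/eqP|/eqP]; [left|right].
Qed.

Lemma symmetry_sqr_eq1 (u : M) : symmetry u -> u *m u = 1%:M.
Proof.
rewrite /symmetry /unitary adjE => -[uu1 u_pm1].
have /orthomx_spectralP uE : u \is normalmx.
  by apply/normalmxP; rewrite (mulmx1C uu1) uu1.
move: (spectralmx u) (spectral_diag u) (spectral_unit u) uE => P d Pu uE.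
have d2 k : d 0 k ^+ 2 = 1.
  have : eigenvalue u (d 0 k) by rewrite uE; exact: eigenvalue_conj_diag.
  by case/u_pm1 => ->; rewrite ?sqrrN expr1n.
have := expr_conj_diag d 2 Pu; rewrite -uE expr2 -mulmxE => ->.
have -> : \row_a d 0 a ^+ 2 = const_mx 1 by apply/matrixP => i j; rewrite !mxE d2.
by rewrite diag_const_mx mulmx1 mulVmx.
Qed.

Lemma sqr_mulmx_eq1P (Q D D' : M) : Q *m Q = 1%:M -> D' *m D = 1%:M ->
  (Q *m D) *m (Q *m D) = 1%:M <-> D *m Q = Q *m D'.
Proof.
move=> QQ1 D'D1; have DD'1 := mulmx1C D'D1; split => [QDQD1 | DQ].
  by rewrite -[Q in RHS]mulmx1 -QDQD1 !mulmxA QQ1 mul1mx -!mulmxA DD'1 mulmx1.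
by rewrite -mulmxA (mulmxA D) DQ !mulmxA QQ1 mul1mx D'D1.
Qed.

Lemma diag_mx_intertwineP (a b : 'rV[C]_n) (Q : M) :
  diag_mx a *m Q = Q *m diag_mx b <-> forall i j, a 0 i * Q i j = Q i j * b 0 j.
Proof.
rewrite mul_diag_mx mul_mx_diag; split => [/matrixP aQb i j | aQb].
  by have := aQb i j; rewrite !mxE.
by apply/matrixP => i j; rewrite !mxE aQb.
Qed.

Lemma sqr_eq1_diag_expi_scale (Q : M) th t :
  (forall k, th k \in `](- pi), pi[) -> Q *m Q = 1%:M ->
  (Q *m diag_expi th) *m (Q *m diag_expi th) = 1%:M ->
  let Qt := Q *m diag_expi (fun k => t * th k) in Qt *m Qt = 1%:M.
Proof.
move=> th_pi QQ1.
have diag_expiN s : diag_expi (fun k => - s k) *m diag_expi s = 1%:M.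
  rewrite /diag_expi mulmx_diag -diag_const_mx; apply: congr1.
  by apply/matrixP => i j; rewrite !mxE mulrC expiNr.
move=> /(sqr_mulmx_eq1P QQ1 (diag_expiN _))/diag_mx_intertwineP intw.
apply/(sqr_mulmx_eq1P QQ1 (diag_expiN _))/diag_mx_intertwineP => j k.
by rewrite !mxE; apply: expi_intertwine_scale => //; have := intw j k; rewrite !mxE.
Qed.

End DiagonalizedMatrices.

Theorem proposition3p8 (R : realType) (n : nat) (u v : 'M[R[i]]_n) :
  symmetry u -> symmetry v -> (d_inf u v < (pi : R)%:E)%E ->
  forall t : R, 0 <= t <= 1 -> spec_pm1 (geodesic u v t).
Proof.
move=> su sv _ t _; apply: spec_pm1_sqr_eq1.
have uu1 := symmetry_sqr_eq1 su; have vv1 := symmetry_sqr_eq1 sv.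
have Uu : u \in unitmx by case/mulmx1_unit: uu1.
have uV : invmx u = u by rewrite -[LHS]mul1mx -uu1 mulmxK.
rewrite /geodesic /mlog uV.
case: xgetP => [_ _ [/skew_hermitian_spectral [P [th [PU ->]]] [y_pi expy]] | _]; last first.
  by rewrite scaler0 expm0 mulmx1.
have Pu := unitarymx_unit PU.
have th_pi k : th k \in `](- pi), pi[.
  by rewrite in_itv /= -ltr_norml; exact: le_lt_trans (opnorm_conj_diag_imag_ge th k PU) y_pi.
rewrite expm_conj_diag_imag // in expy.
rewrite scalemxAl scalemxAr scale_diag_imag expm_conj_diag_imag //.
have uE : u = invmx P *m (P *m u *m invmx P) *m P.
  by rewrite !mulmxA mulVmx // mul1mx mulmxKV.
rewrite uE (conj_mulmx _ _ Pu) (conj_sqr_eq1P _ Pu).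
apply: sqr_eq1_diag_expi_scale => //.
  by rewrite -(conj_sqr_eq1P _ Pu) -uE.
have uuv : u *m (u *m v) = v by rewrite mulmxA uu1 mul1mx.
by rewrite -(conj_sqr_eq1P _ Pu) -(conj_mulmx _ _ Pu) -uE expy uuv vv1.
Qed.
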